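(* Let $M$ be a finite monoid. (i) Every filtered left $M$-set $A$ is cyclic, i.e. there is $c\in A$ with $A=Mc$; in particular $|A|\le |M|$. (ii) The set $\mathsf F_M$ of isomorphism classes of filtered left $M$-sets (equivalently, of points of the topos of right $M$-sets) is finite.
   Context: A left $M$-set $A$ is filtered if the functor $(-)\otimes_M A$ from right $M$-sets to sets preserves finite limits; equivalently: (F1) $A\neq\emptyset$; (F2) if $m_1,m_2\in M$, $a\in A$ and $m_1a=m_2a$, then there are $m\in M$, $\tilde a\in A$ with $m\tilde a=a$ and $m_1m=m_2m$; (F3) for $a_1,a_2\in A$ there are $m_1,m_2\in M$, $a\in A$ with $m_1a=a_1$, $m_2a=a_2$. *)

From HB Require Import structures.
From mathcomp Require Import all_boot.
Set Implicit Arguments. Unset Strict Implicit. Unset Printing Implicit Defensive.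

Local Open Scope group_scope.

Record MSet (M : monoidType) := {
  mset_carrier :> Type;
  act : M -> mset_carrier -> mset_carrier;
  act1 : forall a, act 1 a = a;
  actM : forall m n a, act (m * n) a = act m (act n a)
}.
Arguments act {M} _ _ _.

(* Filtered left M-set, via the elementwise conditions (F1)-(F3). *)
Definition filtered (M : monoidType) (A : MSet M) : Prop :=
  [/\ inhabited A,
      (forall (m1 m2 : M) (a : A), act A m1 a = act A m2 a ->
         exists (m : M) (a' : A), act A m a' = a /\ m1 * m = m2 * m)
    & (forall a1 a2 : A, exists (m1 m2 : M) (a : A),
         act A m1 a = a1 /\ act A m2 a = a2)].

Definition mset_iso (M : monoidType) (A B : MSet M) : Prop :=
  exists f : A -> B, bijective f /\ forall (m : M) (a : A), f (act A m a) = act B m (f a).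

Definition finite_monoid (M : monoidType) : Prop :=
  exists s : seq M, forall x : M, x \in s.

From HB Require Import structures.
From Stdlib Require Import Classical ClassicalEpsilon.
From mathcomp Require Import all_boot zify.

(* Let M be a monoid enumerated by a finite list s.

   (i) Cyclicity.  Only (F1) and (F3) are needed.  For c in A compare the
   orbits Mc by their (finite) sizes.  If a is not in Mc, (F3) applied to c
   and a gives d with c = m1 d and a = m2 d, so Mc ∪ {a} ⊆ Md and the orbit
   of d is strictly larger.  Orbit sizes are bounded by |s|, so iterating
   from any point of A reaches a generator c.  Choosing for each a some f a
   with (f a) c = a gives an injection f : A -> M.

   (ii) Finiteness.  A cyclic M-set A with generator c and section f is
   determined by the retraction rho m := f (m c) of M: A is isomorphic to
   the fixed points of rho with action n . x := rho (n x).  A retraction is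
   a function M -> M, and there are finitely many of those; each function
   on the list s that is the trace of a retraction whose model is filtered
   is sent to that model, every other one to the regular M-set M. *)

Set Implicit Arguments. Unset Strict Implicit. Unset Printing Implicit Defensive.
Local Open Scope group_scope.

(* Any type, viewed as an eqType through classical logic; used to count the
   elements of an orbit in an arbitrary M-set. *)
Definition classic_eqType (T : Type) : Type := T.

Definition classic_eqb (T : Type) (x y : T) : bool :=
  if excluded_middle_informative (x = y) then true else false.

Lemma classic_eqbP (T : Type) : Equality.axiom (@classic_eqb T).
Proof.
by move=> x y; rewrite /classic_eqb; case: excluded_middle_informative; constructor.
Qed.

HB.instance Definition _ (T : Type) :=
  hasDecEq.Build (classic_eqType T) (@classic_eqbP T).

Definition generates (M : monoidType) (A : MSet M) (c : A) : Prop :=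
  forall a : A, exists m : M, a = act A m c.

Section Cyclicity.
Variables (M : monoidType) (s : seq M) (s_full : forall x : M, x \in s).
Variables (A : MSet M)
  (F3 : forall a1 a2 : A, exists (m1 m2 : M) (a : A),
          act A m1 a = a1 /\ act A m2 a = a2).

Definition orbit (c : A) : seq (classic_eqType A) :=
  undup [seq (act A m c : classic_eqType A) | m <- s].

Lemma orbit_size c : size (orbit c) <= size s.
Proof. by rewrite (leq_trans (size_undup _)) // size_map. Qed.

Lemma mem_orbit c m : (act A m c : classic_eqType A) \in orbit c.
Proof. by rewrite mem_undup; apply/mapP; exists m. Qed.

Lemma orbit_grows c : ~ generates c -> exists d : A, size (orbit c) < size (orbit d).
Proof.
move=> /not_all_ex_not [a a_out].
have [m1 [m2 [d [c_eq a_eq]]]] := F3 c a; exists d.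
apply: (@uniq_leq_size _ ((a : classic_eqType A) :: orbit c) (orbit d)).
  rewrite /= undup_uniq andbT mem_undup; apply/mapP => -[m _ a_mc].
  by apply: a_out; exists m.
move=> x; rewrite inE => /predU1P [-> | /[!mem_undup] /mapP [m _ ->]].
  by rewrite -a_eq; apply: mem_orbit.
by rewrite -c_eq -actM map_f.
Qed.

Lemma generator_exists (c : A) : exists g : A, generates g.
Proof.
move: {2}(size s - size (orbit c)) (leqnn (size s - size (orbit c))) => k.
elim: k c => [|k IH] c bound_c;
  have [gen_c | ngen_c] := classic (generates c); try by exists c.
  have [d lt_cd] := orbit_grows ngen_c.
  by move: bound_c lt_cd (orbit_size d); lia.
have [d lt_cd] := orbit_grows ngen_c.
by apply: (IH d); move: bound_c lt_cd (orbit_size d); lia.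
Qed.
End Cyclicity.

Section GeneratorSection.
Variables (M : monoidType) (A : MSet M) (c : A).

Lemma generator_section : generates c -> exists f : A -> M, forall a, act A (f a) c = a.
Proof.
move=> gen_c.
exists (fun a => proj1_sig (constructive_indefinite_description _ (gen_c a))) => a.
by case: constructive_indefinite_description.
Qed.

Lemma section_inj (f : A -> M) : (forall a, act A (f a) c = a) -> injective f.
Proof. by move=> fK; apply: (can_inj (g := fun m => act A m c)). Qed.
End GeneratorSection.

Lemma filtered_cyclic (M : monoidType) (s : seq M) (s_full : forall x : M, x \in s)
  (A : MSet M) :
  filtered A -> exists (c : A) (f : A -> M), forall a, act A (f a) c = a.
Proof.
case=> [[a0] _ F3]; have [c gen_c] := generator_exists s_full F3 a0.
by exists c; apply: generator_section.
Qed.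

Lemma iso_filtered (M : monoidType) (A B : MSet M) :
  mset_iso A B -> filtered A -> filtered B.
Proof.
move=> [g [[h gK hK] gE]] [[a0] F2 F3]; split.
- by constructor; exact: g a0.
- move=> m1 m2 b e.
  have e' : act A m1 (h b) = act A m2 (h b) by apply: (can_inj gK); rewrite !gE hK.
  have [m [a' [ha hm]]] := F2 _ _ _ e'.
  by exists m, (g a'); rewrite -gE ha hK.
- move=> b1 b2; have [m1 [m2 [a [e1 e2]]]] := F3 (h b1) (h b2).
  by exists m1, m2, (g a); rewrite -!gE e1 e2 !hK.
Qed.

Section Models.
Variable M : monoidType.

Definition regular_mset : MSet M :=
  {| mset_carrier := M; act := fun m a => m * a;
     act1 := @mul1g M; actM := fun m n a => esym (mulgA m n a) |}.

Lemma regular_filtered : filtered regular_mset.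
Proof.
split.
- by constructor; exact: (1 : M).
- by move=> m1 m2 a /= e; exists a, (1 : M); rewrite /= !mulg1.
- by move=> a1 a2; exists a1, a2, (1 : M); rewrite /= !mulg1.
Qed.

(* A retraction of M compatible with left multiplication: rho m = f (m c)
   for a cyclic M-set with generator c and section f. *)
Record retraction := Retraction {
  rho :> M -> M;
  rho_idem : forall m, rho (rho m) = rho m;
  rho_mul : forall n m, rho (n * rho m) = rho (n * m)
}.

Section Model.
Variable r : retraction.

Definition model_car : Type := {x : M | r x == x}.

Definition model_act (n : M) (x : model_car) : model_car :=
  exist _ (r (n * val x)) (introT eqP (rho_idem r _)).

Lemma model_act1 x : model_act 1 x = x.
Proof. by apply: val_inj; rewrite /= mul1g; apply/eqP; case: x. Qed.

Lemma model_actM m n x : model_act (m * n) x = model_act m (model_act n x).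
Proof. by apply: val_inj; rewrite /= rho_mul mulgA. Qed.

Definition model : MSet M :=
  {| mset_carrier := model_car; act := model_act;
     act1 := model_act1; actM := model_actM |}.
End Model.

Section Presentation.
Variables (A : MSet M) (c : A) (f : A -> M) (fK : forall a, act A (f a) c = a).

Definition presentation : retraction.
Proof.
refine (@Retraction (fun m => f (act A m c)) _ _).
- by move=> m; rewrite fK.
- by move=> n m; rewrite !actM fK.
Defined.

Lemma model_iso (r : retraction) :
  (forall m, r m = f (act A m c)) -> mset_iso A (model r).
Proof.
move=> rE.
have fixed a : r (f a) == f a by rewrite rE fK.
pose to_model a : model r := exist _ (f a) (fixed a).
pose of_model (x : model r) : A := act A (val x) c.
exists to_model; split.
  exists of_model => [a | [x fix_x]]; first by rewrite /of_model /= fK.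
  by apply: val_inj; rewrite /= -rE; apply/eqP.
by move=> m a; apply: val_inj; rewrite /= rE actM fK.
Qed.
End Presentation.

Section Classification.
Variables (s : seq M) (s_full : forall x : M, x \in s).

(* Functions on the finite list s: a finite index set for the models. *)
Definition code : finType := {ffun seq_sub s -> seq_sub s}.

Definition decode (g : code) (m : M) : M := ssval (g (SeqSub (s_full m))).

(* The model coded by g: a filtered model of a retraction with trace g if
   one exists, and the regular M-set otherwise. *)
Definition coded_model (g : code) : MSet M :=
  match excluded_middle_informative
          (exists r : retraction, (forall m, r m = decode g m) /\ filtered (model r))
  with
  | left H => model (proj1_sig (constructive_indefinite_description _ H))
  | right _ => regular_mset
  end.

Lemma coded_model_filtered g : filtered (coded_model g).
Proof.
rewrite /coded_model; case: excluded_middle_informative => [H|_];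
  last exact: regular_filtered.
by case: constructive_indefinite_description => r [].
Qed.

Lemma coded_model_complete (A : MSet M) :
  filtered A -> exists g : code, mset_iso A (coded_model g).
Proof.
move=> fA; have [c [f fK]] := filtered_cyclic s_full fA.
pose g : code := [ffun t => SeqSub (s_full (f (act A (ssval t) c)))].
have gE m : decode g m = f (act A m c) by rewrite /decode ffunE.
exists g; rewrite /coded_model; case: excluded_middle_informative => [H|[]].
  have [rE _] := proj2_sig (constructive_indefinite_description _ H).
  by apply: (model_iso fK) => m; rewrite rE gE.
exists (presentation fK); split; first by move=> m; rewrite gE.
exact: iso_filtered (@model_iso _ _ _ fK (presentation fK) (fun m => erefl)) fA.
Qed.
End Classification.
End Models.

Theorem theorem3p5 (M : monoidType) (finM : finite_monoid M) :
  (forall A : MSet M, filtered A ->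
     (exists c : A, forall a : A, exists m : M, a = act A m c)
     /\ (exists f : A -> M, injective f))
  /\
  (exists (n : nat) (F : 'I_n -> MSet M),
     (forall i, filtered (F i)) /\
     forall A : MSet M, filtered A -> exists i : 'I_n, mset_iso A (F i)).
Proof.
case: finM => s s_full; split.
  move=> A fA; have [c [f fK]] := filtered_cyclic s_full fA; split.
    by exists c => a; exists (f a); rewrite fK.
  by exists f; exact: section_inj fK.
exists #|code s|, (fun i => coded_model s_full (enum_val i)); split.
  by move=> i; exact: coded_model_filtered.
move=> A fA; have [g iso_g] := coded_model_complete s_full fA.
by exists (enum_rank g); rewrite enum_rankK.
Qed.
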